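(* Let $G=(P,t_2Q)$ be a pair of homogeneous polynomials in $(t_1,t_2)$ of degree $d$ with $P(1,0)\ne0$. Then the resultant of $F=F_{t_1,t_2}(G)/t_2^2$ is $$\mathrm{Res}(F)=4^{4d}[Q(1,1)-P(1,1)]^4P(0,1)^4P(1,0)^{-8}\mathrm{Res}(G)^{16}.$$ In particular, for a homogeneous lift $C$ of a marked point $c\in\mathbb{C}(t)\setminus\{0,1,t\}$ with $F_1=F_{t_1,t_2}(C)/\gcd(F_{t_1,t_2}(C))=(P_1,Q_1)$, $d=\deg F_1$, and $F_{n+1}=F_{t_1,t_2}(F_n)/t_2^2$, one has for all $n\ge1$ $$\mathrm{Res}(F_n)=4^{A_nd}\left(\frac{(P_1(1,1)-Q_1(1,1))P_1(0,1)}{P_1(1,0)^2}\right)^{A_n}\mathrm{Res}(F_1)^{4^{2(n-1)}},\qquad A_n=\frac{4^{2(n-1)}-4^{n-1}}{3}.$$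
   Context: $F_{t_1,t_2}(z,w)=\big((t_1w^2-t_2z^2)^2,\;4t_2zw(w-z)(t_1w-t_2z)\big)$; for a pair of homogeneous polynomials $H=(H_1,H_2)$ in $(t_1,t_2)$, $F_{t_1,t_2}(H)$ means substituting $(z,w)=(H_1,H_2)$. $\mathrm{Res}$ denotes the resultant (Sylvester determinant) of a pair of homogeneous polynomials of the same degree. A homogeneous lift of $c$ is a pair of coprime homogeneous polynomials $C=(c_1,c_2)$ of equal degree with $c(t)=c_1(t,1)/c_2(t,1)$; $\gcd$ denotes the gcd of the two coordinates. *)

From HB Require Import structures.
From mathcomp Require Import all_boot all_order all_algebra all_field.
From mathcomp Require Import fraction.
Set Implicit Arguments.
Unset Strict Implicit.
Unset Printing Implicit Defensive.
Import Order.TTheory GRing.Theory Num.Theory.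
Local Open Scope ring_scope.

(* A homogeneous polynomial H(t1,t2) of degree d over R is encoded by its
   dehomogenization p(t) = H(t,1), a univariate polynomial with
   size p <= d.+1; the coefficient of t1^i t2^(d-i) in H is p`_i, so
   H(t1,t2) = t2^d p(t1/t2).  The degree d is always carried explicitly.
   Under this encoding: H(1,1) = p.[1], H(0,1) = p`_0, H(1,0) = p`_d,
   multiplication by t1 is 'X * _, multiplication by t2 is the identity on
   the encoding (degree + 1), products of forms are products of polys. *)

Section BinaryForms.
Variable R : fieldType.

Definition binform (d : nat) (p : {poly R}) : bool := (size p <= d.+1)%N.

(* two forms of degree d are coprime (no common non-constant homogeneous
   factor): their dehomogenizations are coprime and t2 does not divide both *)
Definition coprime_forms (d : nat) (p q : {poly R}) : bool :=
  coprimep p q && ((size p == d.+1) || (size q == d.+1)).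

(* F_{t1,t2}(z,w) = ((t1 w^2 - t2 z^2)^2, 4 t2 z w (w - z)(t1 w - t2 z)),
   applied to a pair of forms of degree d; result has degree 4d+2.
   Dividing the result by t2^2 (when possible) gives the same encoding
   read at degree 4d. *)
Definition Fmap (H : {poly R} * {poly R}) : {poly R} * {poly R} :=
  let: (z, w) := H in
  ((('X * w ^+ 2 - z ^+ 2) ^+ 2),
   (4%:R * z * w * (w - z) * ('X * w - z))).

Definition Fiter (F1 : {poly R} * {poly R}) (n : nat) := iter n Fmap F1.

(* Sylvester matrix of two binary forms of degree d:
   row i of the block for A = sum_k a_k t1^k t2^(d-k) is
   (0,..,0, a_d, a_(d-1), ..., a_0, 0, ..., 0) starting at column i. *)
Definition sylv_rows (d : nat) (p : {poly R}) : 'M[R]_(d, d + d) :=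
  \matrix_(i < d, j < d + d)
    (if ((i <= j) && (j <= i + d))%N then p`_(d + i - j) else 0).

Definition hres (d : nat) (p q : {poly R}) : R :=
  \det (col_mx (sylv_rows d p) (sylv_rows d q)).

End BinaryForms.

(* A_n = (4^(2(n-1)) - 4^(n-1)) / 3 (an exact division) *)
Definition A_exp (n : nat) : nat := ((4 ^ (2 * (n - 1)) - 4 ^ (n - 1)) %/ 3)%N.

Notation "x %:F" := (@FracField.tofrac _ x) : ring_scope.

From HB Require Import structures.
From mathcomp Require Import all_boot all_order all_algebra all_field.
From mathcomp Require Import fraction perm ring zify.
Set Implicit Arguments.
Unset Strict Implicit.
Unset Printing Implicit Defensive.
Import Order.TTheory GRing.Theory Num.Theory.
Local Open Scope ring_scope.

(* Res_d(p, q) = lead(p)^d prod_{p(r) = 0} q(r) (Poisson formula): reducing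
   the Sylvester matrix modulo p leaves the matrix of multiplication by q on
   F[X]/(p), that is q evaluated at the companion matrix of p.
   For G = (p, t2 q) the first form of F(G) is A^2 with A = X q^2 - p^2, so
   Res(F(G)) is a product over the roots of A of the four factors p, q,
   q - p and X q - p of the second form. Exchanging the roles of the two
   polynomials in each of these products rewrites it through the roots of
   p (where A = X q^2) and of q - p (where A = (X - 1) p^2), and each turns
   out to be an explicit constant times R^2 with R = prod_{p(r) = 0} q(r),
   while Res(G) = lead(p)^d R.
   The iterated formula then follows by induction: F preserves the shape
   (P, t2 Q) with P(1,0) != 0 and raises
   kappa = (P(1,1) - Q(1,1)) P(0,1) / P(1,0)^2 to the fourth power. *)

Section SylvesterReduction.
Variable F : fieldType.

Lemma poly_rev_sum d (f : {poly F}) : (size f <= d)%N ->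
  f = \sum_(k < d) (f`_(d - k.+1))%:P * 'X^(d - k.+1).
Proof.
move=> size_f; rewrite [RHS](reindex_inj rev_ord_inj) /=.
under eq_bigr => k _ do rewrite subnSK // subKn 1?ltnW // mul_polyC.
rewrite -poly_def; apply/polyP => i; rewrite coef_poly.
by case: ltnP => // le_d_i; rewrite nth_default // (leq_trans size_f).
Qed.

Lemma sylv_rowsE d (p : {poly F}) (i : 'I_d) (j : 'I_(d + d)) :
  (size p <= d.+1)%N -> sylv_rows d p i j = ('X^(d - i.+1) * p)`_(d + d - j.+1).
Proof.
move=> size_p; have ltid := ltn_ord i; have ltjd := ltn_ord j.
rewrite mxE coefXnM; case: (leqP i j) => [le_ij|lt_ji] /=.
  case: (leqP j (i + d)) => [le_jid|lt_idj].
    by rewrite ifF; [congr (p`_ _); lia | apply/negbTE; rewrite -leqNgt; lia].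
  by rewrite ifT //; lia.
rewrite ifF; last by apply/negbTE; rewrite -leqNgt; lia.
by rewrite nth_default // (leq_trans size_p) //; lia.
Qed.

(* Subtracting from the rows X^k q of the Sylvester matrix the multiples
   of the rows X^l p given by the quotients of X^k q by p leaves the
   remainders modulo p; the resulting matrix is block triangular. *)
Lemma hres_modp d (p q : {poly F}) : size p = d.+1 -> (size q <= d.+1)%N ->
  hres d p q = lead_coef p ^+ d *
    \det (\matrix_(i < d, k < d) (('X^(d - i.+1) * q) %% p)`_(d - k.+1)).
Proof.
move=> size_p size_q; have p_neq0 : p != 0 by rewrite -size_poly_gt0 size_p.
set Sp := sylv_rows d p.
set Quo : 'M[F]_d := \matrix_(i, k) (('X^(d - i.+1) * q) %/ p)`_(d - k.+1).
set Rem : 'M[F]_d := \matrix_(i, k) (('X^(d - i.+1) * q) %% p)`_(d - k.+1).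
set Mon : 'M[F]_(d, d + d) :=
  \matrix_(k, j) (('X^(d - k.+1) : {poly F})`_(d + d - j.+1)).
have sylv_q : sylv_rows d q = Quo *m Sp + Rem *m Mon.
  apply/matrixP => i j; rewrite sylv_rowsE // !mxE.
  rewrite {1}(divp_eq ('X^(d - i.+1) * q) p) coefD; congr (_ + _).
    rewrite {1}(@poly_rev_sum d (_ %/ p)); last first.
      rewrite size_divp // size_p /= leq_subLR (leq_trans (size_polyMleq _ _)) //.
      by rewrite size_polyXn; move: (ltn_ord i) size_q; lia.
    rewrite big_distrl coef_sum; apply: eq_bigr => k _.
    by rewrite /Sp sylv_rowsE ?size_p // mxE /= -mulrA coefCM.
  rewrite {1}(@poly_rev_sum d (_ %% p)); last by rewrite -ltnS -size_p ltn_modp.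
  by rewrite coef_sum; apply: eq_bigr => k _; rewrite !mxE coefCM.
have Mon_split : Mon = row_mx 0 1.
  rewrite -[Mon]hsubmxK; congr row_mx; apply/matrixP => k j;
    rewrite !mxE coefXn /=; have ltk := ltn_ord k; have ltj := ltn_ord j.
    by case: eqP => //; lia.
  by rewrite -val_eqE /=; congr (_%:R); apply/eqP/eqP; lia.
have Sp_lower : is_trig_mx (lsubmx Sp)^T.
  apply/is_trig_mxP => i j lt_ij; rewrite !mxE /=.
  by rewrite ifF //; apply/negbTE; rewrite negb_and -ltnNge lt_ij.
rewrite /hres -/Sp sylv_q.
have -> : col_mx Sp (Quo *m Sp + Rem *m Mon) = block_mx 1 0 Quo Rem *m col_mx Sp Mon.
  by rewrite mul_block_col mul1mx mul0mx addr0.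
rewrite det_mulmx det_lblock det1 mul1r mulrC; congr (_ * _).
rewrite -[Sp]hsubmxK Mon_split -block_mxEv det_ublock det1 mulr1.
rewrite -det_tr det_trig // lead_coefE size_p /=.
under eq_bigr => i _ do rewrite !mxE /= leqnn leq_addr addnK.
by rewrite prodr_const card_ord.
Qed.

End SylvesterReduction.

Section CompanionMatrix.
Variable F : fieldType.

(* [companionmx] with its dimension fixed in advance, so that it can be
   given the ring structure of 'M_n.+1. *)
Definition companion_mx (d : nat) (p : {poly F}) : 'M[F]_d :=
  \matrix_(i, j) if (i == d.-1 :> nat) then - p`_j else (i.+1 == j :> nat)%:R.

Lemma char_poly_companion_mx d (p : {poly F}) : size p = d.+1 -> p \is monic ->
  char_poly (companion_mx d p) = p.
Proof.
move=> size_p p_monic; have sizeE : (size p).-1 = d by rewrite size_p.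
by case: _ / sizeE; exact: companionmxK.
Qed.

Definition modp_row (d : nat) (p f : {poly F}) : 'rV[F]_d := \row_k (f %% p)`_k.

Lemma modp_rowD d p f g : modp_row d p (f + g) = modp_row d p f + modp_row d p g.
Proof. by apply/rowP => k; rewrite !mxE modpD coefD. Qed.

Lemma modp_rowCM d p f c : modp_row d p (c%:P * f) = c *: modp_row d p f.
Proof. by apply/rowP => k; rewrite !mxE mul_polyC modpZl coefZ. Qed.

Section MonicModulus.
Variables (n : nat) (p : {poly F}).
Hypotheses (size_p : size p = n.+2) (p_monic : p \is monic).

Lemma modp_rowMX f :
  modp_row n.+1 p (f * 'X) = modp_row n.+1 p f *m companion_mx n.+1 p.
Proof.
have p_neq0 : p != 0 by rewrite -size_poly_gt0 size_p.
have lead_p : p`_n.+1 = 1 by move: (monicP p_monic); rewrite lead_coefE size_p.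
set h := f %% p; have size_h : (size h <= n.+1)%N by rewrite -ltnS -size_p ltn_modp.
(* h X exceeds the size bound only by h_n X^(n+1), and p is monic *)
have modXE : (f * 'X) %% p = h * 'X - h`_n *: p.
  rewrite mulrC -modp_mul mulrC -/h.
  rewrite -{1}(subrK (h`_n *: p) (h * 'X)) -mul_polyC addrC.
  rewrite modp_addl_mul_small // size_p ltnS; apply/leq_sizeP => -[|j] // le_nj.
  rewrite coefB coefMX mul_polyC coefZ /=.
  have [lt_nj|le_jn] := ltnP n j; last first.
    by rewrite (_ : j = n) ?lead_p ?mulr1 ?subrr //; lia.
  rewrite (nth_default _ (leq_trans size_h lt_nj)) (nth_default 0 (_ : size p <= j.+1)%N).
    by rewrite mulr0 subr0.
  by rewrite size_p.
apply/rowP => k; rewrite !mxE modXE coefB coefMX coefZ.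
rewrite big_ord_recr /= !mxE /= eqxx.
case: k => [[|k] lt_k] /=.
  rewrite big1 ?add0r ?mulrN // => i _.
  by rewrite !mxE /= (ltn_eqF (ltn_ord i)) /= mulr0.
have lt_kn : (k < n)%N by [].
rewrite (bigD1 (Ordinal lt_kn)) //= !mxE /= (ltn_eqF lt_kn) eqxx mulr1.
rewrite big1 ?addr0 ?mulrN // => i /negPf ne_ik.
rewrite !mxE /= (ltn_eqF (ltn_ord i)) /= eqSS.
by case: eqP => [eq_ik|]; [move: ne_ik; rewrite -val_eqE /= eq_ik eqxx | rewrite mulr0].
Qed.

Lemma modp_rowM f g :
  modp_row n.+1 p (f * g) = modp_row n.+1 p f *m horner_mx (companion_mx n.+1 p) g.
Proof.
elim/poly_ind: g => [|g c IHg].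
  by rewrite mulr0 rmorph0 mulmx0; apply/rowP => k; rewrite !mxE mod0p coef0.
rewrite mulrDr mulrA modp_rowD (mulrC f c%:P) modp_rowCM modp_rowMX IHg.
rewrite rmorphD rmorphM /= horner_mx_X horner_mx_C mulmxDr mulmxA.
by rewrite mul_mx_scalar.
Qed.

Lemma modp_mx_horner q :
  \matrix_(i < n.+1, k < n.+1) (('X^i * q) %% p)`_k
    = horner_mx (companion_mx n.+1 p) q.
Proof.
apply/matrixP => i k.
have := congr1 (fun v : 'rV_n.+1 => v 0 k) (modp_rowM 'X^i q).
rewrite !mxE /= => ->.
have -> : modp_row n.+1 p 'X^i = delta_mx 0 i.
  apply/rowP => j; rewrite !mxE modp_small ?coefXn ?eqxx //.
  by rewrite size_polyXn size_p ltnS.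
rewrite (bigD1 i) //= mxE !eqxx mul1r big1 ?addr0 // => j /negPf ne_ji.
by rewrite mxE ne_ji mul0r.
Qed.

End MonicModulus.
End CompanionMatrix.

Lemma det_row_col_perm (R : comNzRingType) n (s : 'S_n) (A : 'M[R]_n) :
  \det (row_perm s (col_perm s A)) = \det A.
Proof.
rewrite row_permE col_permE !det_mulmx !det_perm odd_permV.
by rewrite mulrCA -signr_addb addbb expr0 mulr1.
Qed.

Lemma det_sub_scalar_mx (R : comNzRingType) n (C : 'M[R]_n.+1) (u : R) :
  \det (C - u%:M) = (-1) ^+ n.+1 * (char_poly C).[u].
Proof.
rewrite -[C - _]opprK opprB -scaleN1r detZ; congr (_ * _).
rewrite /char_poly -horner_evalE -det_map_mx; congr (\det _).
apply/matrixP => i j; rewrite !mxE /= horner_evalE hornerD hornerN hornerC.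
by rewrite hornerMn hornerX.
Qed.

Section PolyRoots.
Variable R : comNzRingType.

Lemma prodr_const_seq (I : Type) (s : seq I) (x : R) : \prod_(i <- s) x = x ^+ size s.
Proof. by rewrite big_const_seq count_predT -[RHS]iter_mulr_1; elim: (size s). Qed.

Lemma prodr_subC (s : seq R) u :
  \prod_(r <- s) (r - u) = (-1) ^+ size s * \prod_(r <- s) (u - r).
Proof.
elim: s => [|r s IHs]; first by rewrite !big_nil mul1r.
by rewrite !big_cons IHs exprS -opprB; ring.
Qed.

Lemma horner_scale_prod_XsubC (c : R) (s : seq R) x :
  (c *: \prod_(u <- s) ('X - u%:P)).[x] = c * \prod_(u <- s) (x - u).
Proof.
rewrite hornerZ horner_prod; congr (_ * _).
by apply: eq_bigr => u _; rewrite hornerXsubC.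
Qed.

Lemma horner_factor_root (f : {poly R}) c us u :
  f = c *: \prod_(v <- us) ('X - v%:P) -> u \in us -> f.[u] = 0.
Proof.
move=> -> us_u; rewrite horner_scale_prod_XsubC (big_rem u us_u) /=.
by rewrite subrr mul0r mulr0.
Qed.

Lemma horner0_factor (f : {poly R}) c us :
  f = c *: \prod_(u <- us) ('X - u%:P) -> f.[0] = c * \prod_(u <- us) (- u).
Proof. by move=> ->; rewrite horner_scale_prod_XsubC; under eq_bigr do rewrite sub0r. Qed.

End PolyRoots.

Section FieldRoots.
Variable F : fieldType.

Lemma size_scale_prod_XsubC (c : F) (us : seq F) :
  c != 0 -> size (c *: \prod_(u <- us) ('X - u%:P)) = (size us).+1.
Proof. by move=> c_neq0; rewrite size_scale // size_prod_XsubC. Qed.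

(* Res(P, f) = +-Res(f, P), expressed through the roots of P and of f *)
Lemma prod_horner_roots_swap (P f : {poly F}) (a c : F) (rs us : seq F) :
  a != 0 -> P = a *: \prod_(r <- rs) ('X - r%:P) ->
  f = c *: \prod_(u <- us) ('X - u%:P) ->
  \prod_(r <- rs) f.[r] =
    c ^+ size rs * \prod_(u <- us) ((-1) ^+ size rs * P.[u] / a).
Proof.
move=> a_neq0 P_factor f_factor.
rewrite f_factor; under eq_bigr do rewrite horner_scale_prod_XsubC.
rewrite big_split /= prodr_const_seq; congr (_ * _).
rewrite exchange_big /=; apply: eq_bigr => u _.
by rewrite P_factor horner_scale_prod_XsubC prodr_subC; field.
Qed.

Lemma sign_addnn d : (-1) ^+ (d + d) = 1 :> F.
Proof. by rewrite exprD -expr2 sqrr_sign. Qed.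

End FieldRoots.

Section PoissonFormula.
Variable F : closedFieldType.

Lemma poly_roots_factor n (f : {poly F}) : size f = n.+1 ->
  exists2 us : seq F, f = lead_coef f *: \prod_(u <- us) ('X - u%:P) & size us = n.
Proof.
move=> size_f; have [us f_factor] := closed_field_poly_normal f; exists us => //.
have lead_neq0 : lead_coef f != 0 by rewrite lead_coef_eq0 -size_poly_gt0 size_f.
by move: size_f; rewrite {1}f_factor size_scale_prod_XsubC // => -[].
Qed.

Lemma det_horner_mx n (C : 'M[F]_n.+1) (rs : seq F) (q : {poly F}) :
  char_poly C = \prod_(r <- rs) ('X - r%:P) ->
  \det (horner_mx C q) = \prod_(r <- rs) q.[r].
Proof.
move=> charC; have size_rs : size rs = n.+1.
  by move: (size_char_poly C); rewrite charC size_prod_XsubC => -[].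
have [us ->] := closed_field_poly_normal q.
rewrite linearZ /= rmorph_prod detZ.
have -> : \det (\prod_(u <- us) horner_mx C ('X - u%:P))
          = \prod_(u <- us) ((-1) ^+ n.+1 * (char_poly C).[u]).
  elim: us => [|u us IHus]; first by rewrite !big_nil det1.
  rewrite !big_cons det_mulmx IHus rmorphB /= horner_mx_X horner_mx_C.
  by rewrite det_sub_scalar_mx.
under [RHS]eq_bigr do rewrite horner_scale_prod_XsubC.
rewrite [RHS]big_split /= prodr_const_seq size_rs; congr (_ * _).
rewrite [RHS]exchange_big /=; apply: eq_bigr => u _.
by rewrite charC horner_prod prodr_subC size_rs; under eq_bigr do rewrite hornerXsubC.
Qed.

Lemma hres_prod_roots d (p q : {poly F}) (a : F) (rs : seq F) :
  size p = d.+1 -> (size q <= d.+1)%N -> p = a *: \prod_(r <- rs) ('X - r%:P) ->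
  hres d p q = a ^+ d * \prod_(r <- rs) q.[r].
Proof.
move=> size_p size_q p_factor.
have lead_p : lead_coef p = a by rewrite p_factor lead_coefZ lead_coef_prod_XsubC mulr1.
have a_neq0 : a != 0 by rewrite -lead_p lead_coef_eq0 -size_poly_gt0 size_p.
rewrite hres_modp // lead_p; congr (_ * _).
have size_rs : size rs = d.
  by move: size_p; rewrite {1}p_factor size_scale_prod_XsubC // => -[].
case: d size_p size_q size_rs => [|n] size_p size_q size_rs.
  by rewrite det_mx00 (size0nil size_rs) big_nil.
set m := \prod_(r <- rs) ('X - r%:P).
have size_m : size m = n.+2 by rewrite size_prod_XsubC size_rs.
pose s := perm (@rev_ord_inj n.+1).
have -> : \matrix_(i < n.+1, k < n.+1) (('X^(n.+1 - i.+1) * q) %% p)`_(n.+1 - k.+1)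
   = row_perm s (col_perm s (\matrix_(i < n.+1, k < n.+1) (('X^i * q) %% m)`_k)).
  apply/matrixP => i k; rewrite !mxE !permE /=.
  by rewrite {1}p_factor modpZr.
rewrite det_row_col_perm modp_mx_horner ?monic_prod_XsubC //.
by rewrite (@det_horner_mx n _ rs) // char_poly_companion_mx ?monic_prod_XsubC.
Qed.

End PoissonFormula.

Section FmapShape.
Variable F : fieldType.
Implicit Types z w : {poly F}.

Lemma coef_top_neq0 D (P : {poly F}) : size P = D.+1 -> P`_D != 0.
Proof.
move=> size_P; rewrite -[D]/(D.+1.-1) -size_P -lead_coefE lead_coef_eq0.
by rewrite -size_poly_gt0 size_P.
Qed.

Lemma size_sqr (f : {poly F}) : size (f ^+ 2) = (size f + size f).-1.
Proof.
have [->|f_neq0] := eqVneq f 0; first by rewrite expr0n size_poly0.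
by rewrite expr2 size_mul.
Qed.

Lemma size_polyM_le (f g : {poly F}) m n :
  (size f <= m.+1)%N -> (size g <= n.+1)%N -> (size (f * g)%R <= (m + n).+1)%N.
Proof. by move=> size_f size_g; rewrite (leq_trans (size_polyMleq _ _)) //; lia. Qed.

Definition Fbase z w : {poly F} := 'X * w ^+ 2 - z ^+ 2.

Lemma Fmap_fst z w : (Fmap (z, w)).1 = Fbase z w ^+ 2.
Proof. by []. Qed.

Lemma coef0_Fmap_fst z w : (Fmap (z, w)).1`_0 = z`_0 ^+ 4.
Proof.
by rewrite -!horner_coef0 Fmap_fst /Fbase !hornerE; ring.
Qed.

(* F(1,1) = ((w - z)(w + z))^2 - 4 z w (w - z)^2 = (w - z)^4 *)
Lemma horner1_Fmap z w :
  (Fmap (z, w)).1.[1] - (Fmap (z, w)).2.[1] = (z.[1] - w.[1]) ^+ 4.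
Proof. by rewrite Fmap_fst /Fbase /= -polyC_natr !hornerE; ring. Qed.

(* the two terms have sizes of different parities, so they cannot cancel *)
Lemma size_Fbase_max z w : w != 0 ->
  size (Fbase z w) = maxn (size w + size w) (size z + size z).-1.
Proof.
move=> w_neq0; have size_Xw2 : size ('X * w ^+ 2) = (size w + size w)%N.
  rewrite mulrC size_mulX ?expf_neq0 // size_sqr.
  by move: (size_poly_gt0 w); rewrite w_neq0; lia.
have size_z2 := size_sqr z; have size_w_gt0 : (0 < size w)%N by rewrite size_poly_gt0.
rewrite /Fbase; have [lt|lt|eq] := ltngtP (size w + size w) (size z + size z).-1.
- rewrite addrC size_polyDl; rewrite ?size_polyN ?size_Xw2 ?size_z2 //; lia.
- rewrite size_polyDl; rewrite ?size_polyN ?size_Xw2 ?size_z2 //; lia.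
- by exfalso; lia.
Qed.

Lemma size_Fmap_snd_lt z w : w != 0 ->
  (size (Fmap (z, w)).2 < size (Fmap (z, w)).1)%N.
Proof.
move=> w_neq0; rewrite Fmap_fst size_sqr size_Fbase_max //=.
have size_w_gt0 : (0 < size w)%N by rewrite size_poly_gt0.
have size_4 : (size (4%:R : {poly F}) <= 1)%N by rewrite -polyC_natr size_polyC leq_b1.
have size_wBz := size_polyD w (- z); rewrite size_polyN in size_wBz.
have size_XwBz : (size ('X * w - z)%R <= maxn (size w).+1 (size z))%N.
  by rewrite (leq_trans (size_polyD _ _)) // size_polyN mulrC size_mulX.
have := size_polyMleq (4%:R * z * w * (w - z)) ('X * w - z).
have := size_polyMleq (4%:R * z * w) (w - z).
have := size_polyMleq (4%:R * z) w.
have := size_polyMleq (4%:R : {poly F}) z.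
move: size_w_gt0 size_4 size_wBz size_XwBz.
(* naming the sizes makes the atoms seen by lia syntactically equal *)
set a := size z; set b := size w.
set s1 := size (4%:R * z * w * (w - z) * ('X * w - z)).
set s2 := size (4%:R * z * w * (w - z)); set s3 := size (4%:R * z * w).
set s4 := size (4%:R * z); set s5 := size (4%:R : {poly F}).
set s6 := size ('X * w - z); set s7 := size (w - z).
lia.
Qed.

Variables (D : nat) (P Q : {poly F}).
Hypotheses (size_P : size P = D.+1) (size_Q : (size Q <= D)%N).

Lemma size_XQ2_lt_P2 : (size ('X * Q ^+ 2)%R < size (P ^+ 2)%R)%N.
Proof.
rewrite size_sqr size_P.
have [->|Q_neq0] := eqVneq Q 0; first by rewrite expr0n mulr0 size_poly0; lia.
rewrite mulrC size_mulX ?expf_neq0 // size_sqr.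
by move: (size_poly_gt0 Q); rewrite Q_neq0; lia.
Qed.

Lemma size_Fbase : size (Fbase P Q) = (D + D).+1.
Proof.
rewrite /Fbase addrC size_polyDl; rewrite size_polyN ?size_XQ2_lt_P2 //.
by rewrite size_sqr size_P; lia.
Qed.

Lemma lead_coef_Fbase : lead_coef (Fbase P Q) = - P`_D ^+ 2.
Proof.
rewrite /Fbase addrC lead_coefDl ?size_polyN ?size_XQ2_lt_P2 //.
by rewrite lead_coefN lead_coef_exp lead_coefE size_P.
Qed.

Lemma size_Fmap_fst : size (Fmap (P, Q)).1 = (4 * D).+1.
Proof.
have Fbase_neq0 : Fbase P Q != 0 by rewrite -size_poly_gt0 size_Fbase.
by rewrite Fmap_fst size_sqr size_Fbase; lia.
Qed.

Lemma lead_Fmap_fst : (Fmap (P, Q)).1`_(4 * D) = P`_D ^+ 4.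
Proof.
rewrite -[X in _`_X]/((4 * D).+1.-1) -size_Fmap_fst -lead_coefE Fmap_fst.
by rewrite lead_coef_exp lead_coef_Fbase sqrrN -exprM.
Qed.

Lemma size_Fmap_snd : (size (Fmap (P, Q)).2 <= 4 * D)%N.
Proof.
have [->|Q_neq0] := eqVneq Q 0; first by rewrite /= !(mulr0, mul0r) size_poly0.
have [D' DE] : exists D', D = D'.+1.
  by exists D.-1; move: (size_poly_gt0 Q) size_Q; rewrite Q_neq0; lia.
have size_4 : (size (4%:R : {poly F}) <= 0.+1)%N.
  by rewrite -polyC_natr size_polyC leq_b1.
have size_P' : (size P <= D.+1)%N by rewrite size_P.
have size_Q' : (size Q <= D'.+1)%N by rewrite -DE.
have size_QP : (size (Q - P)%R <= D.+1)%N.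
  by rewrite (leq_trans (size_polyD _ _)) // size_polyN geq_max size_P' ltnW.
have size_XQP : (size ('X * Q - P)%R <= D.+1)%N.
  rewrite (leq_trans (size_polyD _ _)) // size_polyN geq_max size_P' andbT.
  by rewrite mulrC size_mulX.
move: (size_polyM_le (size_polyM_le (size_polyM_le (size_polyM_le
  size_4 size_P') size_Q') size_QP) size_XQP) => /leq_trans; apply; lia.
Qed.

End FmapShape.

Section FormPairs.
Variable F : fieldType.

Definition kappa (D : nat) (PQ : {poly F} * {poly F}) : F :=
  (PQ.1.[1] - PQ.2.[1]) * PQ.1`_0 / PQ.1`_D ^+ 2.

Lemma kappa_Fmap D (P Q : {poly F}) : size P = D.+1 -> (size Q <= D)%N ->
  kappa (4 * D) (Fmap (P, Q)) = kappa D (P, Q) ^+ 4.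
Proof.
move=> size_P size_Q; have lead_P := coef_top_neq0 size_P.
by rewrite /kappa horner1_Fmap coef0_Fmap_fst lead_Fmap_fst //; field.
Qed.

(* F_1 = F(C)/g is again of the form (P1, t2 Q1) with P1(1,0) != 0 *)
Lemma Fmap_cofactor_shape d (c1 c2 g P1 Q1 : {poly F}) : c2 != 0 ->
  binform d P1 -> coprime_forms d P1 Q1 ->
  (Fmap (c1, c2)).1 = g * P1 -> (Fmap (c1, c2)).2 = g * Q1 ->
  size P1 = d.+1 /\ (size Q1 <= d)%N.
Proof.
move=> c2_neq0 size_P1 /andP[_ full_size] fst_E snd_E.
have := size_Fmap_snd_lt c1 c2_neq0; rewrite fst_E snd_E => lt_snd_fst.
have gP1_neq0 : g * P1 != 0 by rewrite -size_poly_gt0 (leq_ltn_trans _ lt_snd_fst).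
have [g_neq0 P1_neq0] : g != 0 /\ P1 != 0.
  by split; apply: contraNneq gP1_neq0 => ->; rewrite ?mul0r ?mulr0.
have size_Q1 : (size Q1 <= d)%N.
  have [->|Q1_neq0] := eqVneq Q1 0; first by rewrite size_poly0.
  move: lt_snd_fst size_P1; rewrite /binform !size_mul //.
  have : (0 < size g)%N by rewrite size_poly_gt0.
  set sg := size g; set sP := size P1; set sQ := size Q1; lia.
split=> //; case/orP: full_size => /eqP // size_Q1E.
by move: size_Q1; rewrite size_Q1E ltnn.
Qed.

End FormPairs.

Section FbaseRoots.
Variable F : closedFieldType.
Variables (p q : {poly F}) (a : F) (d : nat) (rs ss vs : seq F).
Hypotheses (a_neq0 : a != 0)
  (size_rs : size rs = d) (size_ss : size ss = (d + d)%N) (size_vs : size vs = d)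
  (p_factor : p = a *: \prod_(r <- rs) ('X - r%:P))
  (Fbase_factor : Fbase p q = (- a ^+ 2) *: \prod_(s <- ss) ('X - s%:P))
  (qBp_factor : q - p = (- a) *: \prod_(v <- vs) ('X - v%:P)).

Let a2_neq0 : - a ^+ 2 != 0. Proof. by rewrite oppr_eq0 expf_neq0. Qed.
Let ma_neq0 : - a != 0. Proof. by rewrite oppr_eq0. Qed.

Let hornerFbase x : (Fbase p q).[x] = x * q.[x] ^+ 2 - p.[x] ^+ 2.
Proof. by rewrite /Fbase !hornerE. Qed.

Let horner_roots_p r : r \in rs -> p.[r] = 0.
Proof. exact: horner_factor_root p_factor. Qed.

Let horner_roots_qBp v : v \in vs -> q.[v] = p.[v].
Proof.
move=> vs_v; apply/eqP.
by rewrite -subr_eq0 -hornerN -hornerD (horner_factor_root qBp_factor).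
Qed.

Let R := \prod_(r <- rs) q.[r].

Lemma prod_Fbase_roots_p : \prod_(s <- ss) p.[s] = p.[0] / a * R ^+ 2.
Proof.
rewrite (prod_horner_roots_swap a2_neq0 Fbase_factor p_factor) size_ss sign_addnn.
rewrite (eq_big_seq (fun r => (- r) * q.[r] ^+ 2 / a ^+ 2)); last first.
  move=> r rs_r /=; rewrite hornerFbase horner_roots_p //.
  by field; rewrite a_neq0 a2_neq0.
rewrite !big_split /= prodr_const_seq size_rs (horner0_factor p_factor) -/R.
rewrite exprVn -exprM mul2n -addnn.
have add_neq0 : a ^+ (d + d) != 0 by rewrite expf_neq0.
by field; rewrite add_neq0 a_neq0.
Qed.

Lemma prod_Fbase_roots_q : \prod_(s <- ss) q.[s] = R ^+ 2.
Proof.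
have [us q_factor] := closed_field_poly_normal q.
rewrite (prod_horner_roots_swap a2_neq0 Fbase_factor q_factor) /R.
rewrite (prod_horner_roots_swap a_neq0 p_factor q_factor) size_ss size_rs sign_addnn.
rewrite exprMn -exprM muln2 -addnn -prodrXl; congr (_ * _); apply: eq_big_seq => u us_u.
rewrite hornerFbase (horner_factor_root q_factor us_u) !exprMn sqrr_sign.
by field; rewrite a_neq0 a2_neq0.
Qed.

Lemma sqr_prod_q_roots_p : R ^+ 2 = (\prod_(v <- vs) p.[v]) ^+ 2.
Proof.
have -> : R = \prod_(r <- rs) (q - p).[r].
  by apply: eq_big_seq => r rs_r; rewrite hornerD hornerN horner_roots_p // subr0.
rewrite (prod_horner_roots_swap a_neq0 p_factor qBp_factor) size_rs -size_vs.
rewrite -(prodr_const_seq vs) -big_split /= -!prodrXl; apply: eq_bigr => v _.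
by rewrite !exprMn sqrr_sign; field.
Qed.

Lemma prod_Fbase_roots_qBp :
  \prod_(s <- ss) (q - p).[s] = (p.[1] - q.[1]) / a * R ^+ 2.
Proof.
rewrite (prod_horner_roots_swap a2_neq0 Fbase_factor qBp_factor) size_ss sign_addnn.
rewrite addnn -mul2n exprM -size_vs -prodr_const_seq -big_split /=.
rewrite (eq_big_seq (fun v => (1 - v) * p.[v] ^+ 2)); last first.
  move=> v vs_v /=; rewrite hornerFbase horner_roots_qBp //.
  by field; rewrite a2_neq0.
rewrite big_split /= prodrXl -sqr_prod_q_roots_p.
have -> : p.[1] - q.[1] = - (q - p).[1] by rewrite hornerD hornerN opprB.
by rewrite qBp_factor horner_scale_prod_XsubC; field.
Qed.

(* at a root w of Xq - p one has Fbase(w) = p(w) (q - p)(w), so the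
   roots of Fbase split into contributions of the roots of p and of q - p *)
Lemma prod_Fbase_roots_XqBp :
  \prod_(s <- ss) ('X * q - p).[s] =
    \prod_(r <- rs) ('X * q - p).[r] * \prod_(v <- vs) ('X * q - p).[v].
Proof.
have [ws f_factor] := closed_field_poly_normal ('X * q - p).
rewrite (prod_horner_roots_swap a2_neq0 Fbase_factor f_factor).
rewrite (prod_horner_roots_swap a_neq0 p_factor f_factor).
rewrite (prod_horner_roots_swap ma_neq0 qBp_factor f_factor).
rewrite size_ss size_rs size_vs sign_addnn mulrACA -exprD -big_split.
congr (_ * _); apply: eq_big_seq => w ws_w /=.
have root_w : p.[w] = w * q.[w].
  apply/eqP; rewrite eq_sym -subr_eq0.
  by rewrite -(horner_factor_root f_factor ws_w) !hornerE.
have sign_sqr : (-1) ^+ d * (-1) ^+ d = 1 :> F by rewrite -expr2 sqrr_sign.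
rewrite hornerFbase hornerD hornerN root_w -{1}sign_sqr.
by field; rewrite ma_neq0 a_neq0 a2_neq0.
Qed.

Lemma sqr_prod_Fbase_roots_XqBp :
  (\prod_(s <- ss) ('X * q - p).[s]) ^+ 2 =
    (p.[0] / a * ((p.[1] - q.[1]) / a) * R ^+ 2) ^+ 2.
Proof.
have prod_rs : \prod_(r <- rs) ('X * q - p).[r] = \prod_(r <- rs) r * R.
  rewrite /R -big_split; apply: eq_big_seq => r rs_r /=.
  by rewrite hornerD hornerN hornerM hornerX horner_roots_p // subr0.
have prod_vs : \prod_(v <- vs) ('X * q - p).[v] =
               \prod_(v <- vs) (v - 1) * \prod_(v <- vs) p.[v].
  rewrite -big_split; apply: eq_big_seq => v vs_v /=.
  by rewrite hornerD hornerN hornerM hornerX horner_roots_qBp //; ring.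
have sqr_prod_rs : (\prod_(r <- rs) r) ^+ 2 = (p.[0] / a) ^+ 2.
  rewrite (horner0_factor p_factor) mulrC mulKf // -!prodrXl.
  by apply: eq_bigr => r _; rewrite sqrrN.
have sqr_prod_vs : (\prod_(v <- vs) (v - 1)) ^+ 2 = ((p.[1] - q.[1]) / a) ^+ 2.
  have -> : p.[1] - q.[1] = - (q - p).[1] by rewrite hornerD hornerN opprB.
  rewrite qBp_factor horner_scale_prod_XsubC.
  rewrite (_ : - (- a * _) / a = \prod_(v <- vs) (1 - v)); last by field.
  by rewrite -!prodrXl; apply: eq_bigr => v _; rewrite -sqrrN opprB.
rewrite prod_Fbase_roots_XqBp prod_rs prod_vs !exprMn sqr_prod_rs sqr_prod_vs.
by rewrite -sqr_prod_q_roots_p; ring.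
Qed.

Lemma sqr_prod_Fbase_roots_Fmap_snd :
  (\prod_(s <- ss) (Fmap (p, q)).2.[s]) ^+ 2 =
    4%:R ^+ (4 * d) * (q.[1] - p.[1]) ^+ 4 * p.[0] ^+ 4 / a ^+ 8 * R ^+ 16.
Proof.
under eq_bigr => s _ do rewrite /= !hornerM -polyC_natr hornerC -!mulrA.
rewrite !big_split /= prodr_const_seq size_ss !exprMn sqr_prod_Fbase_roots_XqBp.
rewrite prod_Fbase_roots_p prod_Fbase_roots_q prod_Fbase_roots_qBp -exprM.
rewrite (_ : ((d + d) * 2 = 4 * d)%N); last by lia.
by field.
Qed.

End FbaseRoots.

Lemma A_exp_spec k : (3 * A_exp k.+1 + 4 ^ k = 4 ^ (2 * k))%N.
Proof.
have [t def_t] : exists t, (4 ^ (2 * k) = 4 ^ k + 3 * t)%N.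
  elim: k => [|k [t def_t]]; first by exists 0%N.
  exists (4 * 4 ^ k + 16 * t)%N.
  by rewrite mulnS expnD def_t [(4 ^ k.+1)%N]expnS (_ : (4 ^ 2 = 16)%N) //; lia.
by rewrite /A_exp subSS subn0 def_t addKn mulKn // addnC.
Qed.

Lemma A_expS k : A_exp k.+2 = (4 ^ k.+1 + 16 * A_exp k.+1)%N.
Proof.
have := A_exp_spec k.+1; have := A_exp_spec k.
by rewrite mulnS expnD expnS (_ : (4 ^ 2 = 16)%N) //; lia.
Qed.

Section Iteration.
Variable F : closedFieldType.

Lemma hres_Fmap d (p q : {poly F}) : size p = d.+1 -> (size q <= d)%N ->
  hres (4 * d) (Fmap (p, q)).1 (Fmap (p, q)).2 =
    4%:R ^+ (4 * d) * (q.[1] - p.[1]) ^+ 4 * p`_0 ^+ 4 * (p`_d) ^- 8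
    * hres d p q ^+ 16.
Proof.
move=> size_p size_q; set a := p`_d.
have lead_p : lead_coef p = a by rewrite lead_coefE size_p.
have a_neq0 : a != 0 := coef_top_neq0 size_p.
have size_qBp : size (q - p) = d.+1 by rewrite addrC size_polyDl size_polyN size_p.
have lead_qBp : lead_coef (q - p) = - a.
  by rewrite addrC lead_coefDl ?size_polyN ?size_p // lead_coefN lead_p.
have [rs p_factor size_rs] := poly_roots_factor size_p.
have [ss Fbase_factor size_ss] := poly_roots_factor (size_Fbase size_p size_q).
have [vs qBp_factor size_vs] := poly_roots_factor size_qBp.
rewrite lead_p in p_factor; rewrite lead_qBp in qBp_factor.
rewrite (lead_coef_Fbase size_p size_q) in Fbase_factor.
have Fmap_factor : (Fmap (p, q)).1 = (a ^+ 4) *: \prod_(s <- ss ++ ss) ('X - s%:P).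
  by rewrite Fmap_fst Fbase_factor exprZn sqrrN -exprM big_cat expr2.
rewrite (hres_prod_roots size_p (leqW size_q) p_factor).
rewrite (hres_prod_roots (size_Fmap_fst size_p size_q)
  (leqW (size_Fmap_snd size_p size_q)) Fmap_factor) big_cat /= -expr2.
rewrite (sqr_prod_Fbase_roots_Fmap_snd a_neq0 size_rs size_ss size_vs
  p_factor Fbase_factor qBp_factor).
set R := \prod_(r <- rs) q.[r].
rewrite -!horner_coef0 [(_ * R) ^+ 16]exprMn -!exprM.
by rewrite (_ : (d * 16 = 4 * (4 * d))%N); [field | lia].
Qed.

Lemma hres_Fmap_kappa D (P Q : {poly F}) : size P = D.+1 -> (size Q <= D)%N ->
  hres (4 * D) (Fmap (P, Q)).1 (Fmap (P, Q)).2 =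
    4%:R ^+ (4 * D) * kappa D (P, Q) ^+ 4 * hres D P Q ^+ 16.
Proof.
move=> size_P size_Q; have lead_P := coef_top_neq0 size_P.
by rewrite hres_Fmap // /kappa /=; field.
Qed.

Section Orbit.
Variables (d : nat) (P1 Q1 : {poly F}).
Hypotheses (size_P1 : size P1 = d.+1) (size_Q1 : (size Q1 <= d)%N).

Lemma FiterS k : Fiter (P1, Q1) k.+1 = Fmap (Fiter (P1, Q1) k).
Proof. exact: iterS. Qed.

Lemma size_Fiter k : size (Fiter (P1, Q1) k).1 = (4 ^ k * d).+1 /\
                     (size (Fiter (P1, Q1) k).2 <= 4 ^ k * d)%N.
Proof.
elim: k => [|k]; first by rewrite expn0 mul1n.
rewrite FiterS expnS -mulnA; case: (Fiter _ k) => P Q [size_P size_Q].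
by split; [apply: size_Fmap_fst | apply: size_Fmap_snd].
Qed.

Lemma kappa_Fiter k :
  kappa (4 ^ k * d) (Fiter (P1, Q1) k) = kappa d (P1, Q1) ^+ (4 ^ k).
Proof.
elim: k => [|k IHk]; first by rewrite expn0 mul1n expr1.
have [size_P size_Q] := size_Fiter k.
rewrite FiterS expnS -mulnA; move: size_P size_Q IHk.
case: (Fiter _ k) => P Q size_P size_Q IHk.
by rewrite kappa_Fmap // IHk -exprM mulnC.
Qed.

Lemma hres_Fiter k :
  hres (4 ^ k * d) (Fiter (P1, Q1) k).1 (Fiter (P1, Q1) k).2 =
    4%:R ^+ (A_exp k.+1 * d) * kappa d (P1, Q1) ^+ A_exp k.+1
    * hres d P1 Q1 ^+ (4 ^ (2 * k)).
Proof.
elim: k => [|k IHk]; first by rewrite /A_exp /= mul1n !mul0n !expr0 !mul1r expr1.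
have [size_P size_Q] := size_Fiter k; have := kappa_Fiter k.
rewrite FiterS expnS -mulnA A_expS; move: size_P size_Q IHk.
case: (Fiter _ k) => P Q size_P size_Q IHk kappa_PQ.
rewrite hres_Fmap_kappa // IHk kappa_PQ !exprMn -!exprM.
set x := (4 ^ k)%N; set a := A_exp k.+1.
have -> : ((4 ^ k.+1 + 16 * a) * d = 4 * (x * d) + a * d * 16)%N.
  by rewrite expnS; nia.
have -> : (4 ^ k.+1 + 16 * a = x * 4 + a * 16)%N by rewrite expnS; lia.
have -> : (4 ^ (2 * k.+1) = 4 ^ (2 * k) * 16)%N by rewrite mulnS expnD mulnC.
by rewrite !exprD; ring.
Qed.

End Orbit.

End Iteration.

Theorem proposition3p2 :
  (forall (d : nat) (p q : {poly algC}),
      binform d p -> (size q <= d)%N -> p`_d != 0 ->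
      hres (4 * d)%N (Fmap (p, q)).1 (Fmap (p, q)).2 =
        4%:R ^+ (4 * d)%N * (q.[1] - p.[1]) ^+ 4 * p`_0 ^+ 4 * (p`_d) ^- 8
        * hres d p q ^+ 16)
  /\
  (forall (e : nat) (c1 c2 : {poly algC}) (c : {fraction {poly algC}})
          (d : nat) (P1 Q1 : {poly algC}),
      binform e c1 -> binform e c2 -> coprime_forms e c1 c2 ->
      c = c1%:F / c2%:F -> c != 0 -> c != 1 -> c != ('X)%:F ->
      binform d P1 -> binform d Q1 -> coprime_forms d P1 Q1 ->
      (d <= 4 * e + 2)%N ->
      (exists g : {poly algC}, binform (4 * e + 2 - d)%N g /\
          (Fmap (c1, c2)).1 = g * P1 /\ (Fmap (c1, c2)).2 = g * Q1) ->
      forall n : nat, (1 <= n)%N ->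
        hres (4 ^ (n - 1) * d)%N (Fiter (P1, Q1) (n - 1)%N).1
                               (Fiter (P1, Q1) (n - 1)%N).2 =
          4%:R ^+ (A_exp n * d)%N
          * ((P1.[1] - Q1.[1]) * P1`_0 / P1`_d ^+ 2) ^+ A_exp n
          * hres d P1 Q1 ^+ (4 ^ (2 * (n - 1)))%N).
Proof.
split=> [d p q size_p size_q lead_p | e c1 c2 c d P1 Q1 _ _ _ cE c_neq0 _ _
                                     size_P1 _ coprime_PQ _ [g [_ [fst_E snd_E]]] n n_gt0].
  apply: hres_Fmap size_q; apply/eqP; rewrite eqn_leq (_ : size p <= d.+1)%N //=.
  by rewrite ltnNge; apply: contra lead_p => /leq_sizeP -> //.
have c2_neq0 : c2 != 0.
  by apply: contraNneq c_neq0 => c2_eq0; rewrite cE c2_eq0 tofrac0 invr0 mulr0.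
have [size_P1E size_Q1] := Fmap_cofactor_shape c2_neq0 size_P1 coprime_PQ fst_E snd_E.
by case: n n_gt0 => // k _; rewrite subSS subn0 hres_Fiter.
Qed.
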